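(* Let $\Omega$ be the unit square (if $d=2$) or the unit cube (if $d=3$), and let $\vec u:\Omega\times[0,T]\to\mathbb{R}^d$ with $\vec u\in C^0([0,T];W^{1,\infty}(\Omega))$ satisfy $\vec u\cdot\vec n=0$ on $\partial\Omega$, where $\vec n$ is the outward unit normal. Let $0<\Delta t<T$ be such that $\Delta t\,\|\vec u\|_{C^0([0,T];W^{1,\infty}(\Omega))}<1$. For $\vec x\in\Omega$ and $t\in[\Delta t,T]$ define $\vec y^t_{\Delta t}(\vec x)=\vec x-\Delta t\,\vec u(\vec x,t)$. Then for every $\vec x\in\Omega$ and every $t\in[\Delta t,T]$, $\vec y^t_{\Delta t}(\vec x)\in\Omega$. *)

From HB Require Import structures.
From mathcomp Require Import all_boot all_order all_algebra.
From mathcomp Require Import reals.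
Set Implicit Arguments. Unset Strict Implicit. Unset Printing Implicit Defensive.
Import Order.TTheory GRing.Theory Num.Theory.
Local Open Scope ring_scope.

Definition vec (R : realType) (d : nat) := 'I_d -> R.

Definition enorm (R : realType) (d : nat) (v : vec R d) : R :=
  Num.sqrt (\sum_(i < d) v i ^+ 2).

Definition vsub (R : realType) (d : nat) (v w : vec R d) : vec R d :=
  fun i => v i - w i.

Definition in_Omega (R : realType) (d : nat) (x : vec R d) : Prop :=
  forall i : 'I_d, 0 < x i < 1.
Definition in_cl_Omega (R : realType) (d : nat) (x : vec R d) : Prop :=
  forall i : 'I_d, 0 <= x i <= 1.

(* ||f||_{W^{1,infty}(Omega)} <= N, for f : Omega-bar -> R^d, with the
   W^{1,infty} norm max(||f||_infty, ||grad f||_infty); on the convex domain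
   Omega, ||grad f||_infty (operator norm of the Jacobian w.r.t. the Euclidean
   norm) is the best Lipschitz constant of (the continuous representative of) f. *)
Definition W1inf_le (R : realType) (d : nat) (f : vec R d -> vec R d) (N : R)
  : Prop :=
  (forall x, in_cl_Omega x -> enorm (f x) <= N) /\
  (forall x y, in_cl_Omega x -> in_cl_Omega y ->
     enorm (vsub (f x) (f y)) <= N * enorm (vsub x y)).

Definition in_W1inf (R : realType) (d : nat) (f : vec R d -> vec R d) : Prop :=
  exists N : R, W1inf_le f N.

Definition in_C0_W1inf (R : realType) (d : nat) (T : R)
  (u : vec R d -> R -> vec R d) : Prop :=
  (forall t, 0 <= t <= T -> in_W1inf (fun x => u x t)) /\
  (forall t0, 0 <= t0 <= T -> forall eps : R, 0 < eps ->
     exists2 delta : R, 0 < delta &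
       forall t, 0 <= t <= T -> `|t - t0| < delta ->
         W1inf_le (fun x => vsub (u x t) (u x t0)) eps).

Definition C0W1inf_le (R : realType) (d : nat) (T : R)
  (u : vec R d -> R -> vec R d) (N : R) : Prop :=
  forall t, 0 <= t <= T -> W1inf_le (fun x => u x t) N.

(* u . n = 0 on the boundary of the unit square/cube: on the faces
   {x_i = 0} and {x_i = 1} the outward normal is -e_i resp. e_i. *)
Definition no_flux (R : realType) (d : nat) (T : R)
  (u : vec R d -> R -> vec R d) : Prop :=
  forall t, 0 <= t <= T -> forall x, in_cl_Omega x ->
    forall i : 'I_d, (x i = 0 \/ x i = 1) -> u x t i = 0.

Definition foot (R : realType) (d : nat) (u : vec R d -> R -> vec R d)
  (dt t : R) (x : vec R d) : vec R d :=
  fun i => x i - dt * u x t i.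

From HB Require Import structures.
From mathcomp Require Import all_boot all_order all_algebra.
From mathcomp Require Import reals.
From mathcomp Require Import lra.
Import Order.TTheory GRing.Theory Num.Theory.
Local Open Scope ring_scope.

(* Moving x to the faces x_i = 0 and x_i = 1 changes x by
   x_i and 1 - x_i in the i-th coordinate only, and there u_i vanishes; so the
   Lipschitz bound gives |u_i(x,t)| <= N min(x_i, 1 - x_i).  Since dt N < 1 the
   displacement dt u_i(x,t) is then strictly smaller than the distance from x_i
   to either end of (0,1). *)

Section UnitCube.

Context {R : realType} {d : nat}.
Implicit Types (x v : vec R d) (i : 'I_d).

Definition set_coord x i (a : R) : vec R d :=
  fun j => if j == i then a else x j.

Lemma coord_le_enorm v i : `|v i| <= enorm v.
Proof.
rewrite /enorm -sqrtr_sqr; apply: ler_wsqrtr.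
rewrite (bigD1 i) //= lerDl; apply: sumr_ge0 => j _; exact: sqr_ge0.
Qed.

Lemma enorm_vsub_set_coord x i a : enorm (vsub x (set_coord x i a)) = `|x i - a|.
Proof.
rewrite /enorm (bigD1 i) //= big1 ?addr0 => [|j /negbTE ji].
  by rewrite /vsub /set_coord eqxx sqrtr_sqr.
by rewrite /vsub /set_coord ji subrr expr0n.
Qed.

Lemma in_cl_Omega_set_coord {x} i {a} :
  in_cl_Omega x -> 0 <= a <= 1 -> in_cl_Omega (set_coord x i a).
Proof. by move=> xcl a01 j; rewrite /set_coord; case: eqP. Qed.

Lemma Lipschitz_coord_bound {f : vec R d -> vec R d} {N : R} {x} i {a} :
  W1inf_le f N -> in_cl_Omega x -> 0 <= a <= 1 ->
  f (set_coord x i a) i = 0 -> `|f x i| <= N * `|x i - a|.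
Proof.
move=> [_ Lip] xcl a01 fa0.
rewrite -enorm_vsub_set_coord.
apply: (le_trans _ (Lip _ _ xcl (in_cl_Omega_set_coord i xcl a01))).
have := coord_le_enorm (vsub (f x) (f (set_coord x i a))) i.
by rewrite /vsub fa0 subr0.
Qed.

End UnitCube.

Lemma sub_scaled_in_unit_interval {R : realFieldType} {a h v N : R} :
  0 < a < 1 -> 0 < h -> h * N < 1 ->
  `|v| <= N * a -> `|v| <= N * (1 - a) -> 0 < a - h * v < 1.
Proof.
move=> /andP[a0 a1] h0 hN /ler_normlP[_ v_le] /ler_normlP[v_ge _].
have hv_le : h * v <= h * N * a by rewrite -mulrA ler_pM2l.
have hv_ge : h * - v <= h * N * (1 - a) by rewrite -mulrA ler_pM2l.
have hNa : h * N * a < a by rewrite -[ltRHS]mul1r ltr_pM2r.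
have hNa' : h * N * (1 - a) < 1 - a by rewrite -[ltRHS]mul1r ltr_pM2r ?subr_gt0.
by apply/andP; split; lra.
Qed.

Theorem lemma2 (R : realType) (d : nat) (T dt : R)
  (u : vec R d -> R -> vec R d) :
  (d = 2 \/ d = 3)%N ->
  in_C0_W1inf T u ->
  no_flux T u ->
  0 < dt -> dt < T ->
  (exists N : R, C0W1inf_le T u N /\ dt * N < 1) ->
  forall (x : vec R d) (t : R), in_Omega x -> dt <= t <= T ->
    in_Omega (foot u dt t x).
Proof.
move=> _ _ nf dt0 _ [N [uN dtN]] x t xO /andP[dtt tT] i.
have t0T : 0 <= t <= T by rewrite tT (le_trans (ltW dt0) dtt).
have xcl : in_cl_Omega x by move=> j; have /andP[? ?] := xO j; rewrite !ltW.
have face_bound a : (a = 0 \/ a = 1) -> `|u x t i| <= N * `|x i - a|.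
  move=> a01; have a01' : 0 <= a <= 1 by case: a01 => ->; rewrite ?lexx ?ler01.
  apply: (Lipschitz_coord_bound i (uN t t0T) xcl a01').
  apply: nf => //; first exact: in_cl_Omega_set_coord.
  by rewrite /set_coord eqxx.
have /andP[xi0 xi1] := xO i.
have bound0 := face_bound 0 (or_introl erefl).
have bound1 := face_bound 1 (or_intror erefl).
rewrite subr0 (gtr0_norm xi0) in bound0.
rewrite distrC [`|1 - _|]gtr0_norm ?subr_gt0 // in bound1.
by rewrite /foot (sub_scaled_in_unit_interval _ dt0 dtN bound0 bound1) ?xi0.
Qed.
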